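(* For every integer $n\geq 0$, \[ \overline{p}(n)\equiv (-1)^{n}\,\overline{p}(4n)\pmod{8}. \]
   Context: An overpartition of a nonnegative integer $n$ is a partition of $n$ in which the first occurrence of each distinct part may be overlined. $\overline{p}(n)$ denotes the number of overpartitions of $n$, with $\overline{p}(0)=1$; equivalently $\sum_{n\ge0}\overline{p}(n)q^n=\prod_{k\ge1}\frac{1+q^k}{1-q^k}$. *)

From mathcomp Require Import all_boot.
Set Implicit Arguments. Unset Strict Implicit. Unset Printing Implicit Defensive.

(* A partition of n is encoded by its multiplicity function:
   m i = number of parts equal to i.+1, for i : 'I_n (parts lie in 1..n,
   each multiplicity is at most n).  An overpartition is a partition together
   with, for each distinct part, a choice of whether its first occurrence is
   overlined; hence each partition with d distinct parts gives 2^d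
   overpartitions. *)
Definition is_partition_mult (n : nat) (m : {ffun 'I_n -> 'I_n.+1}) : bool :=
  \sum_(i < n) (i.+1 * m i) == n.

Definition num_distinct_parts (n : nat) (m : {ffun 'I_n -> 'I_n.+1}) : nat :=
  #|[pred i : 'I_n | 0 < m i]|.

Definition overpartition (n : nat) : nat :=
  \sum_(m : {ffun 'I_n -> 'I_n.+1} | is_partition_mult m)
     2 ^ num_distinct_parts m.

From mathcomp Require Import all_boot all_algebra.
From mathcomp Require Import zify ring.
Import GRing.Theory.

(* With B_i = \sum_(v >= 1) q^(i v), the generating function is
   \prod_i (1 + 2 B_i) = 1 + 2 \sum_i B_i + 4 \sum_(i < j) B_i B_j  (mod 8).
   Reading off the coefficient of q^m and pairing up the representations
   m = i v + j w under their symmetries gives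
     p(m) = 4 [m is a square] + 2 r_2(m) - 2 sigma(m)  (mod 8),
   where r_2(m) counts ordered representations of m as a sum of two positive
   squares.  The first two terms are unchanged by m -> 4 m, as squares summing
   to a multiple of 4 are both even, whereas sigma(4 n) = 3 sigma_odd(n) + 4 sigma(n).
   It remains to note that for odd n, r_2(n) is even and sigma(n) = sigma_odd(n),
   and that for even n, sigma(n) = 3 sigma_odd(n)  (mod 4). *)

Lemma sum_ord_sym (F : nat -> nat -> nat) N : (forall i j, F i j = F j i) ->
  \sum_(i < N) \sum_(j < N) F i j =
    2 * \sum_(j < N) \sum_(i < j) F i j + \sum_(i < N) F i i.
Proof.
move=> Fsym; elim: N => [|N IH]; first by rewrite !big_ord0.
rewrite big_ord_recr /= (big_ord_recr N (fun j => \sum_(i < j) F i j)) /=.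
rewrite (big_ord_recr N (fun i => F i i)) /= big_ord_recr /=.
rewrite (eq_bigr (fun i : 'I_N => \sum_(j < N) F i j + F i N)); last first.
  by move=> i _; rewrite big_ord_recr.
rewrite big_split /= IH.
rewrite (eq_bigr (fun j : 'I_N => F j N) (fun j _ => Fsym N j)); ring.
Qed.

Lemma sum_ord_even_odd (F : nat -> nat) N :
  \sum_(c < 2 * N) F c = \sum_(c < N) F (2 * c) + \sum_(c < N) F (2 * c).+1.
Proof.
elim: N => [|N IH]; first by rewrite !big_ord0.
rewrite (_ : 2 * N.+1 = (2 * N).+2); last by lia.
rewrite !big_ord_recr /= IH; ring.
Qed.

Lemma sum_ord_shrink (F : nat -> nat) M N :
  M <= N -> (forall c, M <= c -> F c = 0) -> \sum_(c < N) F c = \sum_(c < M) F c.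
Proof.
move=> leMN F0; rewrite (big_ord_widen _ F leMN) [RHS]big_mkcond.
by apply: eq_bigr => i _; case: ltnP => // /F0.
Qed.

Lemma sum_ord_lt N d : d <= N -> \sum_(v < N) (v < d) = d.
Proof.
move=> ledN; rewrite (eq_bigr (fun v : 'I_N => if v < d then 1 else 0)).
  by rewrite -big_mkcond -(big_ord_widen _ (fun _ => 1)) // sum1_card card_ord.
by move=> v _; case: (_ < _).
Qed.

Lemma sum_ord_mul_eq N s m : 0 < s -> 0 < m -> m <= N ->
  \sum_(a < N) (a.+1 * s == m) = (s %| m).
Proof.
move=> s_gt0 m_gt0 lemN; have [/divnK def_m | ndvd] := boolP (s %| m); last first.
  by apply: big1 => a _; case: eqP => // def_m; rewrite -def_m dvdn_mull in ndvd.
set q := m %/ s in def_m; rewrite -def_m.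
have q_gt0 : 0 < q by case: q def_m m_gt0 => [<-|].
have q_lt : q.-1 < N by rewrite -def_m in lemN; nia.
rewrite (bigD1 (Ordinal q_lt)) //= eqn_pmul2r // prednK // eqxx.
rewrite big1 // => a /eqP neq_a; rewrite eqn_pmul2r //.
case: eqP => // eq_a; case: neq_a; apply: val_inj => /=; lia.
Qed.

Lemma sum_ord_shift M v (g : nat -> nat) : (forall d, M <= d -> g d = 0) ->
  \sum_(w < M) g (v.+1 + w) = \sum_(d < M) (v < d) * g d.
Proof.
move=> g0.
have -> : \sum_(d < M) (v < d) * g d = \sum_(d < v.+1 + M) (v < d) * g d.
  rewrite (@sum_ord_shrink (fun d => (v < d) * g d) M (v.+1 + M)) ?leq_addl //.
  by move=> d /g0 ->; rewrite muln0.
rewrite big_split_ord /= [X in _ = X + _]big1 ?add0n => [|i _]; last first.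
  by rewrite ltnNge -ltnS ltn_ord.
by apply: eq_bigr => w _; rewrite ltn_addr ?mul1n.
Qed.

Lemma sum_ord_sym4 N (H : nat -> nat -> nat -> nat -> nat) :
    (forall a b c d, H a b c d = H b a c d) ->
    (forall a b c d, H a b c d = H a b d c) ->
    (forall a b c d, H a b c d = H c d a b) ->
  \sum_(a < N) \sum_(b < N) \sum_(c < N) \sum_(d < N) H a b c d =
    \sum_(a < N) \sum_(c < N) H a a c c %[mod 4].
Proof.
move=> Hab Hcd Hswap.
pose T a b := \sum_(c < N) \sum_(d < N) H a b c d.
have split_cd a b : T a b =
    2 * \sum_(d < N) \sum_(c < d) H a b c d + \sum_(c < N) H a b c c.
  by apply: sum_ord_sym => c d; apply: Hcd.
pose X := \sum_(b < N) \sum_(a < b) \sum_(d < N) \sum_(c < d) H a b c d.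
pose Y := \sum_(b < N) \sum_(a < b) \sum_(c < N) H a b c c.
pose Z := \sum_(a < N) \sum_(d < N) \sum_(c < d) H a a c d.
pose D := \sum_(a < N) \sum_(c < N) H a a c c.
have offdiag : \sum_(b < N) \sum_(a < b) T a b = 2 * X + Y.
  rewrite /X /Y big_distrr -big_split; apply: eq_bigr => b _.
  by rewrite big_distrr -big_split; apply: eq_bigr => a _; apply: split_cd.
have diag : \sum_(a < N) T a a = 2 * Z + D.
  by rewrite /Z /D big_distrr -big_split; apply: eq_bigr => a _; apply: split_cd.
have cross : Z = Y.
  rewrite /Z /Y exchange_big.
  under eq_bigr do rewrite exchange_big.
  apply: eq_bigr => d _; apply: eq_bigr => c _.
  by apply: eq_bigr => a _; rewrite Hswap.
have -> : \sum_(a < N) \sum_(b < N) \sum_(c < N) \sum_(d < N) H a b c d =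
          2 * \sum_(b < N) \sum_(a < b) T a b + \sum_(a < N) T a a.
  by apply: sum_ord_sym => a b; apply: eq_bigr => c _; apply: eq_bigr => d _.
rewrite offdiag diag cross; lia.
Qed.

Definition ndivisors m := \sum_(i < m) \sum_(v < m) (i.+1 * v.+1 == m).
Definition nreps m i j :=
  \sum_(v < m) \sum_(w < m) (i.+1 * v.+1 + j.+1 * w.+1 == m).
Definition nsq m := \sum_(a < m) (a.+1 * a.+1 == m).
Definition nsum2sq m :=
  \sum_(a < m) \sum_(b < m) (a.+1 * a.+1 + b.+1 * b.+1 == m).
Definition sigma m := \sum_(c < m) (c.+1 %| m) * c.+1.
Definition odd_sigma m := \sum_(c < m) ((2 * c).+1 %| m) * (2 * c).+1.

Lemma nreps_sym m i j : nreps m i j = nreps m j i.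
Proof.
rewrite /nreps exchange_big; apply: eq_bigr => w _; apply: eq_bigr => v _.
by rewrite addnC.
Qed.

Lemma ndivisors_mod2 m : ndivisors m = nsq m %[mod 2].
Proof.
rewrite /ndivisors /nsq (sum_ord_sym (fun i v => (i.+1 * v.+1 == m : nat))).
  by rewrite -modnDm modnMr add0n modn_mod.
by move=> i v; rewrite mulnC.
Qed.

Lemma nreps_mod4 m :
  \sum_(i < m) \sum_(j < m) nreps m i j = nsum2sq m %[mod 4].
Proof.
rewrite -(@sum_ord_sym4 m (fun i v j w => (i.+1 * v.+1 + j.+1 * w.+1 == m : nat))).
- by congr (_ %% 4); apply: eq_bigr => i _; exact: exchange_big.
- by move=> i v j w; rewrite [i.+1 * _]mulnC.
- by move=> i v j w; rewrite [j.+1 * _]mulnC.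
- by move=> i v j w; rewrite addnC.
Qed.

Lemma ndivisors_dvd m : 0 < m -> ndivisors m = \sum_(i < m) (i.+1 %| m).
Proof.
move=> m_gt0; apply: eq_bigr => i _.
by rewrite -(@sum_ord_mul_eq m i.+1 m) //; apply: eq_bigr => v _; rewrite mulnC.
Qed.

Lemma nreps_diag_add_ndivisors m :
  0 < m -> \sum_(i < m) nreps m i i + ndivisors m = sigma m.
Proof.
move=> m_gt0; pose g d := (d.+1 %| m : nat).
have g0 d : m <= d -> g d = 0.
  by rewrite /g; case: (boolP (d.+1 %| m)) => // /dvdn_leq-/(_ m_gt0); lia.
(* m = (i+1)(v+w+2): each divisor d+1 of m arises from d pairs (v, w). *)
have diag : \sum_(i < m) nreps m i i = \sum_(d < m) d * g d.
  transitivity (\sum_(v < m) \sum_(w < m) \sum_(i < m)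
                  (i.+1 * (v.+1 + w).+1 == m : nat)).
    rewrite exchange_big; apply: eq_bigr => v _; rewrite exchange_big.
    by apply: eq_bigr => w _; apply: eq_bigr => i _; rewrite -mulnDr addnS addSn.
  transitivity (\sum_(v < m) \sum_(d < m) (v < d) * g d).
    apply: eq_bigr => v _; rewrite -sum_ord_shift //; apply: eq_bigr => w _.
    exact: sum_ord_mul_eq.
  rewrite exchange_big; apply: eq_bigr => d _.
  by rewrite -big_distrl /= sum_ord_lt // ltnW.
rewrite diag ndivisors_dvd // -big_split; apply: eq_bigr => d _.
by rewrite /g mulnS addnC mulnC.
Qed.

Lemma oddsq_add_sq_neq_mul4 x y n : (2 * x).+1 * (2 * x).+1 + y * y != 4 * n.
Proof.
have := odd_double_half y; rewrite -mul2n.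
by case: (odd y) => /= <-; apply/eqP; nia.
Qed.

Lemma nsq_mul4 n : nsq (4 * n) = nsq n.
Proof.
have -> : nsq (4 * n) = \sum_(a < 2 * (2 * n)) (a.+1 * a.+1 == 4 * n) by rewrite mulnA.
rewrite (sum_ord_even_odd (fun a => (a.+1 * a.+1 == 4 * n : nat))).
rewrite big1 ?add0n => [|c _]; last first.
  by apply/eqP; rewrite eqb0; have := oddsq_add_sq_neq_mul4 c 0 n; rewrite addn0.
transitivity (\sum_(c < 2 * n) (c.+1 * c.+1 == n : nat)).
  by apply: eq_bigr => c _; congr nat_of_bool; apply/eqP/eqP; nia.
apply: (sum_ord_shrink (fun c => (c.+1 * c.+1 == n : nat))) => [|c le_nc]; first lia.
by apply/eqP; rewrite eqb0; apply/eqP; nia.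
Qed.

Lemma nsum2sq_mul4 n : nsum2sq (4 * n) = nsum2sq n.
Proof.
have -> : nsum2sq (4 * n) = \sum_(a < 2 * (2 * n)) \sum_(b < 2 * (2 * n))
    (a.+1 * a.+1 + b.+1 * b.+1 == 4 * n) by rewrite mulnA.
rewrite (sum_ord_even_odd (fun a => \sum_(b < 2 * (2 * n))
    (a.+1 * a.+1 + b.+1 * b.+1 == 4 * n : nat))).
rewrite big1 ?add0n => [|a _]; last first.
  by apply: big1 => b _; apply/eqP; rewrite eqb0 oddsq_add_sq_neq_mul4.
pose G k a b := (a.+1 * a.+1 + b.+1 * b.+1 == k : nat).
transitivity (\sum_(a < 2 * n) \sum_(b < 2 * n) G n a b).
  apply: eq_bigr => a _.
  rewrite (sum_ord_even_odd (fun b => G (4 * n) (2 * a).+1 b)) big1 ?add0n.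
    by apply: eq_bigr => b _; congr nat_of_bool; apply/eqP/eqP; nia.
  by move=> b _; apply/eqP; rewrite eqb0 addnC oddsq_add_sq_neq_mul4.
rewrite (@sum_ord_shrink (fun a => \sum_(b < 2 * n) G n a b) n) => [||a le_na].
- apply: eq_bigr => a _; apply: (sum_ord_shrink (G n a)) => [|b le_nb]; first lia.
  by apply/eqP; rewrite eqb0; apply/eqP; nia.
- lia.
- by apply: big1 => b _; apply/eqP; rewrite eqb0; apply/eqP; nia.
Qed.

Lemma nsum2sq_odd n : odd n -> nsum2sq n = 0 %[mod 2].
Proof.
move=> odd_n; rewrite /nsum2sq (sum_ord_sym
  (fun a b => (a.+1 * a.+1 + b.+1 * b.+1 == n : nat))) => [|a b]; last first.
  by rewrite addnC.
rewrite [X in _ + X]big1 ?addn0 => [|a _]; first by rewrite modnMr.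
by apply/eqP; rewrite eqb0; apply: contraTneq odd_n => <-; rewrite addnn odd_double.
Qed.

Lemma sum_dvd_shrink (f : nat -> nat) N h : (forall c, c < f c) -> 0 < h -> h <= N ->
  \sum_(c < N) (f c %| h) * f c = \sum_(c < h) (f c %| h) * f c.
Proof.
move=> lt_f h_gt0 le_hN.
apply: (sum_ord_shrink (fun c => (f c %| h) * f c)) => // c le_hc.
by case: (boolP (f c %| h)) => // /(dvdn_leq h_gt0); have := lt_f c; lia.
Qed.

Lemma sigma_odd_even h :
  sigma h = odd_sigma h + \sum_(c < h) ((2 * c).+2 %| h) * (2 * c).+2.
Proof.
have [->|h_gt0] := posnP h; first by rewrite /sigma /odd_sigma !big_ord0.
rewrite /sigma -(@sum_dvd_shrink S (2 * h)) // ?leq_pmull //.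
exact: (sum_ord_even_odd (fun c => (c.+1 %| h) * c.+1)).
Qed.

Lemma odd_dvdn_mul2 d h : odd d -> (d %| 2 * h) = (d %| h).
Proof. by move=> odd_d; rewrite Gauss_dvdr // coprimen2. Qed.

Lemma sigma_double h : sigma (2 * h) = odd_sigma h + 2 * sigma h.
Proof.
rewrite /sigma (sum_ord_even_odd (fun c => (c.+1 %| 2 * h) * c.+1)).
congr (_ + _); first by apply: eq_bigr => c _; rewrite odd_dvdn_mul2 //= oddM.
rewrite big_distrr; apply: eq_bigr => c _.
by rewrite -[(2 * c).+2]/(2 + 2 * c) -mulnS dvdn_pmul2l // mulnCA.
Qed.

Lemma odd_sigma_double h : odd_sigma (2 * h) = odd_sigma h.
Proof.
have [->|h_gt0] := posnP h; first by rewrite muln0.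
transitivity (\sum_(c < 2 * h) ((2 * c).+1 %| h) * (2 * c).+1).
  by apply: eq_bigr => c _; rewrite odd_dvdn_mul2 //= oddM.
apply: (@sum_dvd_shrink (fun c => (2 * c).+1)) => // [c|].
- by rewrite ltnS leq_pmull.
- by rewrite leq_pmull.
Qed.

Lemma sigma_odd h : odd h -> sigma h = odd_sigma h.
Proof.
move=> odd_h; rewrite sigma_odd_even big1 ?addn0 // => c _.
case: (boolP ((2 * c).+2 %| h)) => // /dvdn_odd/(_ odd_h).
by rewrite /= oddM.
Qed.

Lemma sigma_mod2 h : sigma h = odd_sigma h %[mod 2].
Proof.
rewrite sigma_odd_even.
have -> : \sum_(c < h) ((2 * c).+2 %| h) * (2 * c).+2 =
          2 * \sum_(c < h) ((2 * c).+2 %| h) * c.+1.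
  rewrite big_distrr /=; apply: eq_bigr => c _.
  by rewrite [in RHS]mulnCA [in RHS]mulnS.
by rewrite -modnDmr modnMr addn0.
Qed.

Lemma sigma_mul4 n : sigma (4 * n) = 3 * odd_sigma n + 4 * sigma n.
Proof.
rewrite -[4 * n]/(2 * 2 * n) -mulnA sigma_double odd_sigma_double sigma_double.
ring.
Qed.

Lemma sigma_double_mod4 h : sigma (2 * h) = 3 * odd_sigma (2 * h) %[mod 4].
Proof. by rewrite sigma_double odd_sigma_double; have := sigma_mod2 h; lia. Qed.

Local Open Scope ring_scope.

Lemma prod_1Dmul2_mod8 (R : comNzRingType) (b : nat -> R) N : exists S : R,
  \prod_(i < N) (1 + b i *+ 2) =
    1 + (\sum_(i < N) b i) *+ 2 + (\sum_(j < N) \sum_(i < j) b i * b j) *+ 4 + S *+ 8.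
Proof.
elim: N => [|N [S IH]]; first by exists 0; rewrite !big_ord0 !mul0rn !addr0.
rewrite big_ord_recr /= IH (big_ord_recr N b) /=.
rewrite (big_ord_recr N (fun j => \sum_(i < j) b i * b j)) /= -mulr_suml.
set s2 := \sum_(i < N) \sum_(j < i) b j * b i.
by exists (S + s2 * b N + S * b N *+ 2); ring.
Qed.

Definition part_series m i : {poly int} := \sum_(v < m) 'X^(i.+1 * v.+1).

Lemma overpartition_coef m :
  (overpartition m)%:R = (\prod_(i < m) (1 + part_series m i *+ 2))`_m.
Proof.
pose w v : nat := if (0 < v)%N then 2 else 1.
have factor_sum (i : 'I_m) :
    1 + part_series m i *+ 2 = \sum_(v < m.+1) (w v)%:R *: 'X^(i.+1 * v).
  rewrite big_ord_recl /= muln0 expr0 scale1r -sumrMnl; congr (_ + _).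
  by apply: eq_bigr => v _; rewrite scaler_nat.
(* Expanding the product over the choice of a multiplicity f i for each part
   size i.+1 yields exactly the sum defining [overpartition]. *)
rewrite (eq_bigr _ (fun i _ => factor_sum i)) bigA_distr_bigA /= coef_sum.
rewrite /overpartition natr_sum big_mkcond /=; apply: eq_bigr => f _.
rewrite scaler_prod prodrXr coefZ coefXn -natr_prod eq_sym /is_partition_mult.
case: (_ == _); rewrite ?mulr1 ?mulr0 //.
by rewrite -big_mkcond /= prod_nat_const.
Qed.

Lemma coef_part_series m i k :
  (part_series m i)`_k = (\sum_(v < m) (i.+1 * v.+1 == k))%:R.
Proof.
by rewrite coef_sum natr_sum; apply: eq_bigr => v _; rewrite coefXn eq_sym.
Qed.

Lemma coef_part_series_mul m i j :
  (part_series m i * part_series m j)`_m = (nreps m i j)%:R.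
Proof.
rewrite mulr_suml coef_sum natr_sum; apply: eq_bigr => v _.
rewrite mulr_sumr coef_sum natr_sum; apply: eq_bigr => w _.
by rewrite -exprD coefXn eq_sym.
Qed.

Lemma overpartition_mod8_counts m : (0 < m)%N ->
  ((overpartition m)%:Z = (ndivisors m)%:Z *+ 2
     + (\sum_(j < m) \sum_(i < j) nreps m i j)%:Z *+ 4 %[mod 8])%Z.
Proof.
move=> m_gt0; have [S expand] := @prod_1Dmul2_mod8 _ (part_series m) m.
have coef_linear : (\sum_(i < m) part_series m i)`_m = (ndivisors m)%:R.
  by rewrite coef_sum natr_sum; apply: eq_bigr => i _; rewrite coef_part_series.
have coef_quadratic :
    (\sum_(j < m) \sum_(i < j) part_series m i * part_series m j)`_m =
    (\sum_(j < m) \sum_(i < j) nreps m i j)%:R.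
  rewrite coef_sum natr_sum; apply: eq_bigr => j _.
  by rewrite coef_sum natr_sum; apply: eq_bigr => i _; apply: coef_part_series_mul.
rewrite -[(overpartition m)%:Z]natz overpartition_coef expand.
rewrite coefD coefMn coefD coefMn coefD coefMn coef1 gtn_eqF // add0r.
rewrite coef_linear coef_quadratic.
rewrite !natz; lia.
Qed.

Lemma overpartition_mod8 m : (0 < m)%N ->
  ((overpartition m)%:Z =
     4 * (nsq m)%:Z + 2 * (nsum2sq m)%:Z - 2 * (sigma m)%:Z %[mod 8])%Z.
Proof.
(* With tau = ndivisors m, D the diagonal and X the off-diagonal part of the
   nreps m i j: p(m) = 2 tau + 4 X, 2 X + D = r_2(m) (mod 4), D + tau = sigma m
   and tau = [m is a square] (mod 2). *)
move=> m_gt0; have := overpartition_mod8_counts m m_gt0.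
have := nreps_diag_add_ndivisors m m_gt0; have := ndivisors_mod2 m.
have := nreps_mod4 m; rewrite (sum_ord_sym (nreps m)) => [|i j]; last first.
  exact: nreps_sym.
lia.
Qed.

Local Close Scope ring_scope.

Theorem theorem1p2 (n : nat) :
  ((overpartition n)%:Z = (-1) ^+ n * (overpartition (4 * n))%:Z %[mod 8])%Z.
Proof.
have [->|n_gt0] := posnP n; first by rewrite muln0 expr0 mul1r.
have n4_gt0 : 0 < 4 * n by rewrite muln_gt0 n_gt0.
have := overpartition_mod8 n n_gt0; have := overpartition_mod8 (4 * n) n4_gt0.
rewrite nsq_mul4 nsum2sq_mul4 sigma_mul4 -signr_odd.
have [odd_n|even_n] := boolP (odd n).
- rewrite expr1 sigma_odd //; have := nsum2sq_odd n odd_n; lia.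
- have def_n : n = 2 * n./2 by rewrite -[LHS]odd_double_half (negbTE even_n) mul2n.
  have := sigma_double_mod4 n./2; rewrite -def_n expr0; lia.
Qed.
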